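(* There exists an absolute constant $C_2>0$ such that for every $\delta_0>0$ the following holds: if $\|\mathcal T-\mathcal S\|_{\mathrm{op}}<\delta_0$ and $x\in\mathbb C^n$ satisfies $$d(x,\mathcal G)\le\frac{16-5C_2\delta_0}{192+4C_2\delta_0}\,\|x^\natural\|,$$ then $x^+$ is a critical point of $f$ if and only if $x^+$ is a global minimizer of $f$.
   Context: Let $n,m\ge 1$, $a_1,\dots,a_m\in\mathbb C^n$ and $x^\natural\in\mathbb C^n$ with $x^\natural\ne0$. For $a,b\in\mathbb C^n$ write $\langle a,b\rangle=\sum_{j}a_j\overline{b_j}$ and let $\|\cdot\|$ be the Euclidean norm. Let $y_i=|\langle a_i,x^\natural\rangle|^2$. For $v\in\mathbb C^n$ put $v^+=(\mathrm{Re}\,v,\mathrm{Im}\,v)\in\mathbb R^{2n}$; $x$ and $x^+$ always correspond. Define $f:\mathbb R^{2n}\to\mathbb R$ by $f(x^+)=\sum_{i=1}^m\big(|\langle a_i,x\rangle|^2-y_i\big)^2$. Let $\mathcal G$ be the set of global minimizers of $f$ (viewed in $\mathbb C^n$) and $d(x,\mathcal G)$ the Euclidean distance from $x$ to $\mathcal G$. Fix $\sigma>0$ (in the paper, $\sigma^2=\mathrm{Var}((a_i^+)_1)$ for random measurement vectors), set $c=m\sigma^4$. Define the order-4 tensors on $\mathbb R^{2n}$: $\mathcal T=\frac1c\sum_{i=1}^m(a_i^+)^{\otimes 4}$ and $\mathcal S_{i_1i_2i_3i_4}=\mathbf 1_{i_1=i_2,\,i_3=i_4}+\mathbf 1_{i_1=i_3,\,i_2=i_4}+\mathbf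 1_{i_1=i_4,\,i_2=i_3}$, and $\|\mathcal R\|_{\mathrm{op}}=\sup\{\langle \mathcal R,u_1\otimes u_2\otimes u_3\otimes u_4\rangle:\ u_j\in\mathbb R^{2n},\ \|u_1\|\|u_2\|\|u_3\|\|u_4\|=1\}$ (tensor inner product = sum of entrywise products). *)

From HB Require Import structures.
From mathcomp Require Import all_boot all_order all_algebra.
From mathcomp Require Import complex.
From mathcomp Require Import all_classical all_reals all_analysis.
Set Implicit Arguments. Unset Strict Implicit. Unset Printing Implicit Defensive.
Import Order.TTheory GRing.Theory Num.Theory.
Import numFieldNormedType.Exports.
Local Open Scope ring_scope.
Local Open Scope classical_set_scope.

Section PhaseRetrieval.
Variable R : realType.

Definition cinner n (a b : 'rV[R[i]]_n) : R[i] :=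
  \sum_(j < n) a ord0 j * (conjc (b ord0 j)).

Definition csqabs (z : R[i]) : R := (complex.Re z) ^+ 2 + (complex.Im z) ^+ 2.

Definition cnorm n (x : 'rV[R[i]]_n) : R := Num.sqrt (\sum_(j < n) csqabs (x ord0 j)).

Definition rnorm k (u : 'rV[R]_k) : R := Num.sqrt (\sum_(j < k) (u ord0 j) ^+ 2).

Definition plusv n (v : 'rV[R[i]]_n) : 'rV[R]_(n + n) :=
  row_mx (map_mx (@complex.Re R) v) (map_mx (@complex.Im R) v).

Definition unplus n (u : 'rV[R]_(n + n)) : 'rV[R[i]]_n :=
  \row_(j < n) Complex (lsubmx u ord0 j) (rsubmx u ord0 j).

Definition meas n m (a : 'I_m -> 'rV[R[i]]_n) (xnat : 'rV[R[i]]_n) (i : 'I_m) : R :=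
  csqabs (cinner (a i) xnat).

Definition floss n m (a : 'I_m -> 'rV[R[i]]_n) (xnat : 'rV[R[i]]_n)
  (u : 'rV[R]_(n + n)) : R :=
  \sum_(i < m) (csqabs (cinner (a i) (unplus u)) - meas a xnat i) ^+ 2.

Definition critical_point k (g : 'rV[R]_k -> R) (u : 'rV[R]_k) : Prop :=
  differentiable g u /\ 'd g u = (0 : 'rV[R]_k -> R).

Definition global_minimizer k (g : 'rV[R]_k -> R) (u : 'rV[R]_k) : Prop :=
  forall w, g u <= g w.

Definition Gset n m (a : 'I_m -> 'rV[R[i]]_n) (xnat : 'rV[R[i]]_n) : set 'rV[R[i]]_n :=
  [set z | global_minimizer (floss a xnat) (plusv z)].

Definition dist_set n (x : 'rV[R[i]]_n) (G : set 'rV[R[i]]_n) : R :=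
  inf [set cnorm (x - g) | g in G].

Definition tensor4 k := 'I_k -> 'I_k -> 'I_k -> 'I_k -> R.

Definition Ttensor n m (a : 'I_m -> 'rV[R[i]]_n) (sigma : R) : tensor4 (n + n) :=
  fun i1 i2 i3 i4 => (m%:R * sigma ^+ 4)^-1 *
    \sum_(i < m) (plusv (a i) ord0 i1 * plusv (a i) ord0 i2 *
                  plusv (a i) ord0 i3 * plusv (a i) ord0 i4).

Definition Stensor k : tensor4 k :=
  fun i1 i2 i3 i4 =>
    ((i1 == i2) && (i3 == i4))%:R + ((i1 == i3) && (i2 == i4))%:R
    + ((i1 == i4) && (i2 == i3))%:R.

Definition tpair k (Rt : tensor4 k) (u1 u2 u3 u4 : 'rV[R]_k) : R :=
  \sum_(i1 < k) \sum_(i2 < k) \sum_(i3 < k) \sum_(i4 < k)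
    Rt i1 i2 i3 i4 * u1 ord0 i1 * u2 ord0 i2 * u3 ord0 i3 * u4 ord0 i4.

Definition opnorm4 k (Rt : tensor4 k) : R :=
  sup [set r | exists u1 u2 u3 u4 : 'rV[R]_k,
         rnorm u1 * rnorm u2 * rnorm u3 * rnorm u4 = 1 /\ r = tpair Rt u1 u2 u3 u4].

Definition tsub k (A B : tensor4 k) : tensor4 k :=
  fun i1 i2 i3 i4 => A i1 i2 i3 i4 - B i1 i2 i3 i4.

End PhaseRetrieval.

From HB Require Import structures.
From mathcomp Require Import all_boot all_order all_algebra.
From mathcomp Require Import complex.
From mathcomp Require Import all_classical all_reals all_analysis.
From mathcomp Require Import ring lra.
Import Order.TTheory GRing.Theory Num.Theory.
Import numFieldNormedType.Exports.
Set Implicit Arguments. Unset Strict Implicit. Unset Printing Implicit Defensive.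
Local Open Scope ring_scope.
Local Open Scope classical_set_scope.

(* Write [u = x^+], [Q_i u = |<a_i, x>|^2] and [B_i] for the polarization of [Q_i].
   Given a critical point [u], rotate a global minimizer by a phase to get [g] with
   [Q_i g = y_i], [<i g, u - g> = 0] and [|u - g|] no larger.  With [h = u - g] we have
   [(Q_i u - y_i) B_i(u, h) = (2 B + Q)(B + Q)] for [B = B_i(g, h)], [Q = Q_i h], so the
   vanishing derivative along [h] and [Q^2 - B^2 = 3 (B + Q)^2 - 2 (2 B + Q)(B + Q)] give
   [sum_i B_i(g, h)^2 <= sum_i Q_i(h)^2].  The tensor hypothesis says that the fourth
   moments [sum_i <a_i^+,p><a_i^+,q><a_i^+,r><a_i^+,s>] are [c (<p,q><r,s> + <p,r><q,s> +
   <p,s><q,r>)] up to [c d |p||q||r||s|], whence [sum_i B_i(g,h)^2 >= c (2 - 4d) |g|^2 |h|^2],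
   [sum_i Q_i(h)^2 <= c (8 + 4d) |h|^4] and [|g| ~ |x^natural|].  These bounds are
   incompatible when [0 < 6 |h| <= |x^natural|].  With [C2 = 160] the hypothesis on
   [d(x, G)] forces [delta0 <= 1/50] and [d(x, G) <= |x^natural| / 12]. *)

Section RealInnerProduct.
Variables (R : realType) (k : nat).
Implicit Types (u v w : 'rV[R]_k) (c : R).

Definition rdot u v : R := \sum_(j < k) u ord0 j * v ord0 j.

Lemma rdotC u v : rdot u v = rdot v u.
Proof. by apply: eq_bigr => j _; rewrite mulrC. Qed.

Lemma rdotDl u v w : rdot (u + v) w = rdot u w + rdot v w.
Proof. by rewrite -big_split; apply: eq_bigr => j _; rewrite mxE mulrDl. Qed.

Lemma rdotZl c u w : rdot (c *: u) w = c * rdot u w.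
Proof. by rewrite mulr_sumr; apply: eq_bigr => j _; rewrite mxE mulrA. Qed.

Lemma rdotDr u v w : rdot w (u + v) = rdot w u + rdot w v.
Proof. by rewrite rdotC rdotDl !(rdotC w). Qed.

Lemma rdotZr c u w : rdot w (c *: u) = c * rdot w u.
Proof. by rewrite rdotC rdotZl rdotC. Qed.

Lemma rdotNl u w : rdot (- u) w = - rdot u w.
Proof. by rewrite -scaleN1r rdotZl mulN1r. Qed.

Lemma rdotNr u w : rdot w (- u) = - rdot w u.
Proof. by rewrite rdotC rdotNl rdotC. Qed.

Lemma rdotBl u v w : rdot (u - v) w = rdot u w - rdot v w.
Proof. by rewrite rdotDl rdotNl. Qed.

Lemma rdotBr u v w : rdot w (u - v) = rdot w u - rdot w v.
Proof. by rewrite rdotDr rdotNr. Qed.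

Lemma rdot_ge0 u : 0 <= rdot u u.
Proof. by apply: sumr_ge0 => j _; rewrite -expr2 sqr_ge0. Qed.

Lemma rdot_eq0 u : rdot u u = 0 -> u = 0.
Proof.
move/eqP; rewrite psumr_eq0 => [/allP u0|j _]; last by rewrite -expr2 sqr_ge0.
apply/rowP => j; rewrite mxE; apply/eqP.
by rewrite -sqrf_eq0 expr2; apply: u0; rewrite mem_index_enum.
Qed.

Lemma rnormE u : rnorm u = Num.sqrt (rdot u u).
Proof. by congr Num.sqrt; apply: eq_bigr => j _; rewrite expr2. Qed.

Lemma rnorm_sqr u : rnorm u ^+ 2 = rdot u u.
Proof. by rewrite rnormE sqr_sqrtr ?rdot_ge0. Qed.

Lemma rnorm_ge0 u : 0 <= rnorm u.
Proof. exact: sqrtr_ge0. Qed.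

Lemma rnormZ c u : rnorm (c *: u) = `|c| * rnorm u.
Proof. by rewrite !rnormE rdotZl rdotZr mulrA -expr2 sqrtrM ?sqr_ge0 // sqrtr_sqr. Qed.

Lemma rnormN u : rnorm (- u) = rnorm u.
Proof. by rewrite -scaleN1r rnormZ normrN1 mul1r. Qed.

Lemma rnorm_eq0 u : rnorm u = 0 -> u = 0.
Proof. by move=> u0; apply: rdot_eq0; rewrite -rnorm_sqr u0 expr0n. Qed.

Lemma abs_coord_le_rnorm u j : `|u ord0 j| <= rnorm u.
Proof.
rewrite /rnorm -sqrtr_sqr ler_wsqrtr // (bigD1 j) //= lerDl.
by apply: sumr_ge0 => i _; rewrite sqr_ge0.
Qed.

End RealInnerProduct.

Section Tensor4.
Variables (R : realType) (k : nat).
Local Notation V := 'rV[R]_k.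
Implicit Types (A B : tensor4 R k).

Lemma tpair_tsub A B (u1 u2 u3 u4 : V) :
  tpair (tsub A B) u1 u2 u3 u4 = tpair A u1 u2 u3 u4 - tpair B u1 u2 u3 u4.
Proof.
rewrite /tpair -sumrB; apply: eq_bigr => i1 _; rewrite -sumrB; apply: eq_bigr => i2 _.
rewrite -sumrB; apply: eq_bigr => i3 _; rewrite -sumrB; apply: eq_bigr => i4 _.
by rewrite /tsub; ring.
Qed.

Lemma tpair_tsum (I : Type) (r : seq I) (F : I -> tensor4 R k) (u1 u2 u3 u4 : V) :
  tpair (fun i1 i2 i3 i4 => \sum_(l <- r) F l i1 i2 i3 i4) u1 u2 u3 u4 =
  \sum_(l <- r) tpair (F l) u1 u2 u3 u4.
Proof.
rewrite /tpair [RHS]exchange_big; apply: eq_bigr => i1 _.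
rewrite [RHS]exchange_big; apply: eq_bigr => i2 _.
rewrite [RHS]exchange_big; apply: eq_bigr => i3 _.
rewrite [RHS]exchange_big; apply: eq_bigr => i4 _.
by rewrite !mulr_suml.
Qed.

Lemma tpairZ1 c A (u1 u2 u3 u4 : V) :
  tpair A (c *: u1) u2 u3 u4 = c * tpair A u1 u2 u3 u4.
Proof.
rewrite /tpair mulr_sumr; apply: eq_bigr => i1 _; rewrite mulr_sumr; apply: eq_bigr => i2 _.
rewrite mulr_sumr; apply: eq_bigr => i3 _; rewrite mulr_sumr; apply: eq_bigr => i4 _.
by rewrite mxE; ring.
Qed.

Lemma tpair_tscale c A (u1 u2 u3 u4 : V) :
  tpair (fun i1 i2 i3 i4 => c * A i1 i2 i3 i4) u1 u2 u3 u4 = c * tpair A u1 u2 u3 u4.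
Proof.
rewrite /tpair mulr_sumr; apply: eq_bigr => i1 _; rewrite mulr_sumr; apply: eq_bigr => i2 _.
rewrite mulr_sumr; apply: eq_bigr => i3 _; rewrite mulr_sumr; apply: eq_bigr => i4 _.
by rewrite !mulrA.
Qed.

Lemma tpair_rank1 (x1 x2 x3 x4 u1 u2 u3 u4 : V) :
  tpair (fun i1 i2 i3 i4 => x1 ord0 i1 * x2 ord0 i2 * x3 ord0 i3 * x4 ord0 i4) u1 u2 u3 u4
  = rdot x1 u1 * rdot x2 u2 * rdot x3 u3 * rdot x4 u4.
Proof.
rewrite /tpair /rdot -!mulrA big_distrl; apply: eq_bigr => i1 _ /=.
rewrite [X in _ = _ * X]big_distrl big_distrr; apply: eq_bigr => i2 _ /=.
rewrite [X in _ = _ * (_ * X)]big_distrl big_distrr big_distrr; apply: eq_bigr => i3 _ /=.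
by rewrite !big_distrr; apply: eq_bigr => i4 _ /=; ring.
Qed.

Lemma sum_delta (F : 'I_k -> R) i : \sum_(j < k) (i == j)%:R * F j = F i.
Proof.
rewrite (bigD1 i) //= eqxx mul1r big1 ?addr0 // => j /negPf.
by rewrite eq_sym => ->; rewrite mul0r.
Qed.

Lemma sum_pairing (u1 u2 u3 u4 : V) :
  \sum_(i1 < k) \sum_(i2 < k) \sum_(i3 < k) \sum_(i4 < k)
    ((i1 == i2)%:R * (u1 ord0 i1 * u2 ord0 i2)) * ((i3 == i4)%:R * (u3 ord0 i3 * u4 ord0 i4))
  = rdot u1 u2 * rdot u3 u4.
Proof.
have rdotE (v w : V) : rdot v w = \sum_(i < k) \sum_(j < k) (i == j)%:R * (v ord0 i * w ord0 j).
  by apply: eq_bigr => i _; rewrite sum_delta.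
rewrite !rdotE big_distrl; apply: eq_bigr => i1 _; rewrite big_distrl; apply: eq_bigr => i2 _.
by rewrite big_distrr; apply: eq_bigr => i3 _; rewrite big_distrr.
Qed.

Lemma tpair_Stensor (u1 u2 u3 u4 : V) :
  tpair (@Stensor R k) u1 u2 u3 u4 =
  rdot u1 u2 * rdot u3 u4 + rdot u1 u3 * rdot u2 u4 + rdot u1 u4 * rdot u2 u3.
Proof.
rewrite -(sum_pairing u1 u2) -(sum_pairing u1 u3) -(sum_pairing u1 u4).
under [X in _ = _ + X + _]eq_bigr do rewrite exchange_big.
under [X in _ = _ + X]eq_bigr do rewrite exchange_big.
under [X in _ = _ + X]eq_bigr do under eq_bigr do rewrite exchange_big.
rewrite /tpair -!big_split; apply: eq_bigr => i1 _; rewrite -!big_split; apply: eq_bigr => i2 _.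
rewrite -!big_split; apply: eq_bigr => i3 _; rewrite -!big_split; apply: eq_bigr => i4 _ /=.
by rewrite /Stensor -!mulnb !natrM; ring.
Qed.

(* Bounds the set whose [sup] is [opnorm4 A], so that this [sup] is not a junk value. *)
Definition tnorm1 A : R :=
  \sum_(i1 < k) \sum_(i2 < k) \sum_(i3 < k) \sum_(i4 < k) `|A i1 i2 i3 i4|.

Lemma abs_tpair_le_tnorm1 A (u1 u2 u3 u4 : V) :
  `|tpair A u1 u2 u3 u4| <= tnorm1 A * (rnorm u1 * rnorm u2 * rnorm u3 * rnorm u4).
Proof.
have le_sum (F G : 'I_k -> R) : (forall i, `|F i| <= G i) -> `|\sum_i F i| <= \sum_i G i.
  by move=> FG; apply: le_trans (ler_norm_sum _ _ _) (ler_sum _ (fun i _ => FG i)).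
rewrite /tnorm1 /tpair mulr_suml; apply: (le_sum) => i1; rewrite mulr_suml; apply: (le_sum) => i2.
rewrite mulr_suml; apply: (le_sum) => i3; rewrite mulr_suml; apply: (le_sum) => i4.
by rewrite !normrM !mulrA; do !(apply: ler_pM; rewrite ?mulr_ge0 ?normr_ge0 ?abs_coord_le_rnorm //).
Qed.

Lemma tpair_le_opnorm A (u1 u2 u3 u4 : V) :
  tpair A u1 u2 u3 u4 <= opnorm4 A * (rnorm u1 * rnorm u2 * rnorm u3 * rnorm u4).
Proof.
set P := _ * rnorm u4.
have P_ge0 : 0 <= P by rewrite !mulr_ge0 ?rnorm_ge0.
have [P_gt0|P_le0] := ltrP 0 P; last first.
  have P0 : P = 0 by apply/le_anti; rewrite P_le0 P_ge0.
  apply: le_trans (ler_norm _) _.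
  by have := abs_tpair_le_tnorm1 A u1 u2 u3 u4; rewrite -/P P0 !mulr0.
rewrite /opnorm4; set S := [set r | _].
have S_tpair : S (P^-1 * tpair A u1 u2 u3 u4).
  exists (P^-1 *: u1), u2, u3, u4; rewrite tpairZ1; split=> //.
  rewrite rnormZ ger0_norm ?invr_ge0 //.
  have -> : P^-1 * rnorm u1 * rnorm u2 * rnorm u3 * rnorm u4 = P^-1 * P by rewrite /P; ring.
  by rewrite mulVf ?gt_eqF.
have S_sup : has_sup S.
  split; first by exists (P^-1 * tpair A u1 u2 u3 u4).
  exists (tnorm1 A) => _ [v1 [v2 [v3 [v4 [v1234 ->]]]]].
  by apply: le_trans (ler_norm _) _; rewrite -[tnorm1 A]mulr1 -v1234 abs_tpair_le_tnorm1.
by rewrite -ler_pdivrMr // mulrC; apply: sup_upper_bound.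
Qed.

Lemma abs_tpair_le_opnorm A (u1 u2 u3 u4 : V) :
  `|tpair A u1 u2 u3 u4| <= opnorm4 A * (rnorm u1 * rnorm u2 * rnorm u3 * rnorm u4).
Proof.
rewrite ler_norml tpair_le_opnorm andbT lerNl -mulN1r -tpairZ1.
by rewrite -[rnorm u1](rnormN u1) scaleN1r tpair_le_opnorm.
Qed.

End Tensor4.

Section ComplexStructure.
Variables (R : realType) (n : nat).
Implicit Types (u v : 'rV[R]_(n + n)).

(* Multiplication by [i] in the coordinates [v^+ = (Re v, Im v)]. *)
Definition jmul u : 'rV[R]_(n + n) := row_mx (- rsubmx u) (lsubmx u).

Fact jmul_is_linear : linear jmul.
Proof.
by move=> c u v; rewrite /jmul !linearP /= scale_row_mx add_row_mx.
Qed.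

HB.instance Definition _ := GRing.isLinear.Build R _ _ _ jmul jmul_is_linear.

Lemma lsubmx_jmul u : lsubmx (jmul u) = - rsubmx u.
Proof. exact: row_mxKl. Qed.

Lemma rsubmx_jmul u : rsubmx (jmul u) = lsubmx u.
Proof. exact: row_mxKr. Qed.

Lemma jmulK u : jmul (jmul u) = - u.
Proof. by rewrite {1}/jmul lsubmx_jmul rsubmx_jmul -opp_row_mx hsubmxK. Qed.

Lemma rdot_hsplit u v :
  rdot u v = rdot (lsubmx u) (lsubmx v) + rdot (rsubmx u) (rsubmx v).
Proof. by rewrite /rdot big_split_ord; congr (_ + _); apply: eq_bigr => j _; rewrite !mxE. Qed.

Lemma rdot_jmul2 u v : rdot (jmul u) (jmul v) = rdot u v.
Proof. by rewrite !rdot_hsplit !lsubmx_jmul !rsubmx_jmul rdotNl rdotNr opprK addrC. Qed.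

Lemma rdot_jmul_skew u v : rdot (jmul u) v = - rdot u (jmul v).
Proof.
rewrite !rdot_hsplit !lsubmx_jmul !rsubmx_jmul rdotNl rdotNr opprD opprK.
by rewrite addrC.
Qed.

Lemma rdot_jmul_diag u : rdot u (jmul u) = 0.
Proof.
apply/eqP; rewrite -[_ == 0](mulrn_eq0 _ 2) mulr2n.
by rewrite [X in X + _]rdotC rdot_jmul_skew addNr.
Qed.

Lemma rnorm_jmul u : rnorm (jmul u) = rnorm u.
Proof. by rewrite !rnormE rdot_jmul2. Qed.

End ComplexStructure.

Section RealCoordinates.
Variables (R : realType) (n : nat).
Implicit Types (z w : 'rV[R[i]]_n) (u : 'rV[R]_(n + n)).

Lemma lsubmx_plusv z : lsubmx (plusv z) = map_mx (@complex.Re R) z.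
Proof. exact: row_mxKl. Qed.

Lemma rsubmx_plusv z : rsubmx (plusv z) = map_mx (@complex.Im R) z.
Proof. exact: row_mxKr. Qed.

Lemma Re_sum (F : 'I_n -> R[i]) :
  complex.Re (\sum_(j < n) F j) = \sum_(j < n) complex.Re (F j).
Proof. by apply: (big_morph _ _ (erefl _)) => [[? ?] [? ?]]. Qed.

Lemma Im_sum (F : 'I_n -> R[i]) :
  complex.Im (\sum_(j < n) F j) = \sum_(j < n) complex.Im (F j).
Proof. by apply: (big_morph _ _ (erefl _)) => [[? ?] [? ?]]. Qed.

Lemma Re_cinner w z : complex.Re (cinner w z) = rdot (plusv w) (plusv z).
Proof.
rewrite rdot_hsplit !lsubmx_plusv !rsubmx_plusv /rdot Re_sum -big_split.
by apply: eq_bigr => j _; rewrite !mxE; case: (w ord0 j) => ? ?; case: (z ord0 j) => ? ? /=; ring.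
Qed.

Lemma Im_cinner w z : complex.Im (cinner w z) = rdot (plusv w) (jmul (plusv z)).
Proof.
rewrite rdot_hsplit lsubmx_jmul rsubmx_jmul !lsubmx_plusv !rsubmx_plusv /rdot Im_sum -big_split.
by apply: eq_bigr => j _; rewrite !mxE; case: (w ord0 j) => ? ?; case: (z ord0 j) => ? ? /=; ring.
Qed.

Lemma plusvK : cancel (@plusv R n) (@unplus R n).
Proof.
move=> z; apply/rowP => j.
by rewrite mxE lsubmx_plusv rsubmx_plusv !mxE; case: (z ord0 j).
Qed.

Lemma unplusK : cancel (@unplus R n) (@plusv R n).
Proof.
move=> u; rewrite -[RHS]hsubmxK /plusv; congr row_mx; apply/rowP => j; by rewrite !mxE.
Qed.

Lemma plusvB z w : plusv (z - w) = plusv z - plusv w.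
Proof.
rewrite /plusv opp_row_mx add_row_mx; congr row_mx; apply/rowP => j; rewrite !mxE;
by case: (z ord0 j) => ? ?; case: (w ord0 j).
Qed.

Lemma cnorm_plusv z : cnorm z = rnorm (plusv z).
Proof.
rewrite /cnorm rnormE rdot_hsplit lsubmx_plusv rsubmx_plusv /rdot -big_split.
by congr Num.sqrt; apply: eq_bigr => j _; rewrite /csqabs !mxE !expr2.
Qed.

End RealCoordinates.

Section Distance.
Variables (R : realType) (n : nat).
Implicit Types (x z : 'rV[R[i]]_n) (G : set 'rV[R[i]]_n).

Lemma cnorm_gt0 z : z != 0 -> 0 < cnorm z.
Proof.
move=> z_neq0; rewrite cnorm_plusv lt_def rnorm_ge0 andbT; apply: contra z_neq0 => /eqP z0.
by rewrite -[z]plusvK (rnorm_eq0 z0); apply/eqP/rowP => j; rewrite !mxE.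
Qed.

Lemma dist_set_ge0 x G : G !=set0 -> 0 <= dist_set x G.
Proof.
by move=> [g Gg]; apply: lb_le_inf => [|_ [h _ <-]]; [exists (cnorm (x - g)), g | exact: sqrtr_ge0].
Qed.

Lemma exists_dist_set_lt x G e : G !=set0 -> dist_set x G < e ->
  exists2 g, G g & cnorm (x - g) < e.
Proof.
move=> [g Gg] dist_lt.
have S_inf : has_inf [set cnorm (x - h) | h in G].
  by split; [exists (cnorm (x - g)), g | exists 0 => _ [h _ <-]; exact: sqrtr_ge0].
have gap : 0 < e - dist_set x G by rewrite subr_gt0.
have [_ [h Gh <-]] := inf_adherent gap S_inf.
by rewrite subrKC; exists h.
Qed.

End Distance.

Lemma exists_unit_aligned (R : rcfType) (s t : R) :
  exists cc ss : R, [/\ cc ^+ 2 + ss ^+ 2 = 1, cc * t = ss * s & s <= cc * s + ss * t].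
Proof.
have [st0|st_neq0] := eqVneq (s ^+ 2 + t ^+ 2) 0.
  have [s0 t0] : s = 0 /\ t = 0 by split; apply/eqP; rewrite -sqrf_eq0; apply/eqP; nra.
  by exists 1, 0; rewrite s0 t0 expr1n expr0n addr0 !mulr0.
have st_gt0 : 0 < s ^+ 2 + t ^+ 2 by rewrite lt_def st_neq0 addr_ge0 ?sqr_ge0.
set N := Num.sqrt (s ^+ 2 + t ^+ 2).
have N_gt0 : 0 < N by rewrite sqrtr_gt0.
have NN : N ^+ 2 = s ^+ 2 + t ^+ 2 by rewrite sqr_sqrtr ?ltW.
exists (s / N), (t / N); split.
- by rewrite !expr_div_n -mulrDl -NN mulfV ?expf_neq0 ?gt_eqF.
- by rewrite mulrAC [RHS]mulrAC [s * t]mulrC.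
- have -> : s / N * s + t / N * t = N.
    by rewrite mulrAC [t / N * t]mulrAC -mulrDl -!expr2 -NN expr2 mulfK ?gt_eqF.
  apply: le_trans (ler_norm s) _.
  by rewrite -sqrtr_sqr ler_wsqrtr // lerDl sqr_ge0.
Qed.

Section PhaseRotation.
Variables (R : realType) (n : nat).
Implicit Types (u g : 'rV[R]_(n + n)).

(* Multiplication by the complex number [cc + i ss]. *)
Definition phase_rot (cc ss : R) u := cc *: u + ss *: jmul u.

Lemma rdot_phase_rot cc ss u : cc ^+ 2 + ss ^+ 2 = 1 ->
  rdot (phase_rot cc ss u) (phase_rot cc ss u) = rdot u u.
Proof.
move=> css; rewrite /phase_rot !(rdotDl, rdotDr, rdotZl, rdotZr) rdot_jmul2 rdot_jmul_diag.
rewrite [rdot (jmul u) u]rdotC rdot_jmul_diag.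
transitivity ((cc ^+ 2 + ss ^+ 2) * rdot u u); first ring.
by rewrite css mul1r.
Qed.

Lemma exists_phase_aligned u g : exists cc ss : R, cc ^+ 2 + ss ^+ 2 = 1 /\
  let g' := phase_rot cc ss g in
  rdot g' (jmul (u - g')) = 0 /\ rnorm (u - g') <= rnorm (u - g).
Proof.
have [cc [ss [css cs_orth cs_closer]]] := exists_unit_aligned (rdot u g) (rdot u (jmul g)).
exists cc, ss; split=> //=; set g' := phase_rot cc ss g.
have g'_orth : rdot g' (jmul u) = 0.
  rewrite /g' /phase_rot rdotDl !rdotZl rdot_jmul2 (rdotC g (jmul u)) rdot_jmul_skew.
  by rewrite (rdotC g u) mulrN cs_orth addNr.
split; first by rewrite linearB rdotBr g'_orth rdot_jmul_diag subr0.
have ug' : rdot u g' = cc * rdot u g + ss * rdot u (jmul g) by rewrite rdotDr !rdotZr.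
rewrite !rnormE ler_wsqrtr // !(rdotBl, rdotBr) rdot_phase_rot // (rdotC g' u) (rdotC g u) ug'.
by lra.
Qed.

End PhaseRotation.

Section Measurements.
Variables (R : realType) (n m : nat) (a : 'I_m -> 'rV[R[i]]_n).
Implicit Types (u v w : 'rV[R]_(n + n)).

(* [qmeas i (plusv x) = |<a_i, x>|^2] (see [csqabs_cinner]); [bmeas i] is its polarization. *)
Definition lmeas i u : R := rdot (plusv (a i)) u.
Definition qmeas i u : R := lmeas i u ^+ 2 + lmeas i (jmul u) ^+ 2.
Definition bmeas i u v : R := lmeas i u * lmeas i v + lmeas i (jmul u) * lmeas i (jmul v).

Lemma lmeasD i u v : lmeas i (u + v) = lmeas i u + lmeas i v.
Proof. exact: rdotDr. Qed.

Lemma lmeasZ i c u : lmeas i (c *: u) = c * lmeas i u.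
Proof. exact: rdotZr. Qed.

Lemma lmeasN i u : lmeas i (- u) = - lmeas i u.
Proof. exact: rdotNr. Qed.

Lemma lmeas_jmul i u : lmeas i (jmul u) = rdot (- jmul (plusv (a i))) u.
Proof. by rewrite rdotNl rdot_jmul_skew opprK. Qed.

Lemma csqabs_cinner i z : csqabs (cinner (a i) z) = qmeas i (plusv z).
Proof. by rewrite /csqabs Re_cinner Im_cinner. Qed.

Lemma flossE xnat u :
  floss a xnat u = \sum_(i < m) (qmeas i u - qmeas i (plusv xnat)) ^+ 2.
Proof. by apply: eq_bigr => i _; rewrite /meas !csqabs_cinner unplusK. Qed.

Lemma qmeasD i u v : qmeas i (u + v) = qmeas i u + 2 * bmeas i u v + qmeas i v.
Proof. by rewrite /qmeas /bmeas linearD !lmeasD; ring. Qed.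

Lemma bmeasDl i u v w : bmeas i (u + v) w = bmeas i u w + bmeas i v w.
Proof. by rewrite /bmeas linearD !lmeasD; ring. Qed.

Lemma bmeas_diag i u : bmeas i u u = qmeas i u.
Proof. by rewrite /bmeas /qmeas !expr2. Qed.

Lemma qmeas_phase_rot i u (cc ss : R) : cc ^+ 2 + ss ^+ 2 = 1 ->
  qmeas i (phase_rot cc ss u) = qmeas i u.
Proof.
move=> css; rewrite /qmeas /phase_rot !linearD !linearZ /= jmulK !lmeasD !lmeasZ lmeasN.
transitivity ((cc ^+ 2 + ss ^+ 2) * (lmeas i u ^+ 2 + lmeas i (jmul u) ^+ 2)); first ring.
by rewrite css mul1r.
Qed.

Lemma sum_bmeas_sqr_le_qmeas (y : 'I_m -> R) u h :
  (forall i, qmeas i u = y i) ->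
  \sum_(i < m) (qmeas i (u + h) - y i) * bmeas i (u + h) h = 0 ->
  \sum_(i < m) bmeas i u h ^+ 2 <= \sum_(i < m) qmeas i h ^+ 2.
Proof.
move=> uy crit; rewrite -subr_ge0 -sumrB.
have -> : \sum_(i < m) (qmeas i h ^+ 2 - bmeas i u h ^+ 2) =
    \sum_(i < m) 3 * (bmeas i u h + qmeas i h) ^+ 2 -
    2 * \sum_(i < m) (qmeas i (u + h) - y i) * bmeas i (u + h) h.
  rewrite mulr_sumr -sumrB; apply: eq_bigr => i _.
  by rewrite qmeasD bmeasDl bmeas_diag uy; ring.
by rewrite crit mulr0 subr0 sumr_ge0 // => i _; rewrite mulr_ge0 ?sqr_ge0.
Qed.

End Measurements.

Section Differential.
Variables (R : realType) (n m : nat) (a : 'I_m -> 'rV[R[i]]_n) (xnat : 'rV[R[i]]_n).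
Local Notation V := 'rV[R]_(n + n).
Implicit Types (u v w : V).

Lemma is_derive_affine (U W : normedModType R) (f : U -> W) (x v : U) (df : W) :
  (forall h : R, f (h *: v + x) = f x + h *: df) -> is_derive x v f df.
Proof.
move=> fxv.
have quot : {near 0^', cst df =1 (fun h : R => h^-1 *: ((f \o shift x) (h *: v) - f x))}.
  near=> h; rewrite /= /shift fxv addrC addKr scalerA mulVf ?scale1r //.
  by near: h; exact: nbhs_dnbhs_neq.
have cvg_df : (fun h : R => h^-1 *: ((f \o shift x) (h *: v) - f x)) @ 0^' --> df.
  exact: cvg_trans (near_eq_cvg quot) (cvg_cst df).
by split; [exact: cvgP cvg_df | exact: cvg_lim cvg_df].
Unshelve. all: by end_near.
Qed.

Lemma is_derive_rdot w u v : is_derive u v (rdot w) (rdot w v).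
Proof. by apply: is_derive_affine => h; rewrite rdotDr rdotZr addrC. Qed.

Lemma differentiable_rdot w u : differentiable (rdot w) u.
Proof.
have -> : rdot w = \sum_(j < n + n) (fun x : V => w ord0 j * x ord0 j).
  by apply/funext => x; rewrite fct_sumE.
apply: differentiable_sum => j.
exact: differentiableZ (differentiable_coord u ord0 j).
Qed.

Lemma qmeas_fun i : qmeas a i = rdot (plusv (a i)) ^+ 2 + rdot (- jmul (plusv (a i))) ^+ 2.
Proof. by apply/funext => u; rewrite /qmeas lmeas_jmul. Qed.

Lemma floss_fun : floss a xnat =
  \sum_(i < m) (qmeas a i - cst (qmeas a i (plusv xnat))) ^+ 2.
Proof. by apply/funext => x; rewrite flossE fct_sumE. Qed.

Lemma differentiable_floss u : differentiable (floss a xnat) u.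
Proof.
rewrite floss_fun; apply: differentiable_sum => i; rewrite qmeas_fun.
by apply: differentiableX; apply: differentiableB => //;
  apply: differentiableD; apply: differentiableX; apply: differentiable_rdot.
Qed.

Lemma is_derive_qmeas i u v : is_derive u v (qmeas a i) (2 * bmeas a i u v).
Proof.
rewrite qmeas_fun; apply: is_derive_eq.
  exact: is_deriveD (is_deriveX _ (is_derive_rdot _ _ _)) (is_deriveX _ (is_derive_rdot _ _ _)).
by rewrite /bmeas !lmeas_jmul /lmeas /GRing.scale /=; ring.
Qed.

Lemma derive_floss u v : 'D_v (floss a xnat) u =
  \sum_(i < m) 4 * (qmeas a i u - qmeas a i (plusv xnat)) * bmeas a i u v.
Proof.
have dF := is_derive_sum (fun i => is_deriveX 2
  (is_deriveB (is_derive_qmeas i u v) (is_derive_cst (qmeas a i (plusv xnat)) u v))).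
rewrite floss_fun derive_val.
by apply: eq_bigr => i _; rewrite /GRing.scale /= !fctE; ring.
Qed.

End Differential.

Section Concentration.
Variables (R : realType) (n m : nat) (a : 'I_m -> 'rV[R[i]]_n) (sigma d : R).
Hypotheses (m_gt0 : (0 < m)%N) (sigma_gt0 : 0 < sigma).
Hypothesis T_near_S : opnorm4 (tsub (Ttensor a sigma) (@Stensor R (n + n))) <= d.
Local Notation V := 'rV[R]_(n + n).
Implicit Types (g h w : V).

Let c := m%:R * sigma ^+ 4.

Let c_gt0 : 0 < c.
Proof. by rewrite mulr_gt0 ?exprn_gt0 ?ltr0n. Qed.

Definition moment4 (p q r s : V) : R :=
  \sum_(i < m) lmeas a i p * lmeas a i q * lmeas a i r * lmeas a i s.

Lemma tpair_Ttensor (p q r s : V) :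
  tpair (Ttensor a sigma) p q r s = c^-1 * moment4 p q r s.
Proof.
rewrite /Ttensor tpair_tscale tpair_tsum; congr (_ * _).
by apply: eq_bigr => i _; rewrite tpair_rank1.
Qed.

Lemma moment4_near_Stensor (p q r s : V) :
  `|moment4 p q r s - c * tpair (@Stensor R _) p q r s|
    <= c * d * (rnorm p * rnorm q * rnorm r * rnorm s).
Proof.
have -> : moment4 p q r s = c * tpair (Ttensor a sigma) p q r s.
  by rewrite tpair_Ttensor mulrA mulfV ?mul1r ?gt_eqF.
rewrite -mulrBr -tpair_tsub normrM gtr0_norm // -mulrA ler_pM2l //.
apply: le_trans (abs_tpair_le_opnorm _ _ _ _ _) _.
by rewrite ler_wpM2r // !mulr_ge0 ?rnorm_ge0.
Qed.

Lemma sum_qmeas_sqr_bounds w :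
  c * (8 - 4 * d) * rdot w w ^+ 2 <= \sum_(i < m) qmeas a i w ^+ 2
    <= c * (8 + 4 * d) * rdot w w ^+ 2.
Proof.
have -> : \sum_(i < m) qmeas a i w ^+ 2 =
    moment4 w w w w + 2 * moment4 w w (jmul w) (jmul w) +
    moment4 (jmul w) (jmul w) (jmul w) (jmul w).
  by rewrite /moment4 mulr_sumr -!big_split; apply: eq_bigr => i _; rewrite /qmeas /=; ring.
have := moment4_near_Stensor w w w w; have := moment4_near_Stensor w w (jmul w) (jmul w).
have := moment4_near_Stensor (jmul w) (jmul w) (jmul w) (jmul w).
rewrite !ler_distl !tpair_Stensor !rnorm_jmul !rdot_jmul2 rdot_jmul_diag -rnorm_sqr.
move=> /andP[l1 u1] /andP[l2 u2] /andP[l3 u3].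
by apply/andP; split; nra.
Qed.

Lemma sum_bmeas_sqr_ge g h : rdot g (jmul h) = 0 ->
  c * (2 - 4 * d) * (rdot g g * rdot h h) <= \sum_(i < m) bmeas a i g h ^+ 2.
Proof.
move=> gh_orth.
have hg_orth : rdot h (jmul g) = 0 by rewrite -[LHS]opprK -rdot_jmul_skew rdotC gh_orth oppr0.
have -> : \sum_(i < m) bmeas a i g h ^+ 2 = moment4 g h g h +
    2 * moment4 g h (jmul g) (jmul h) + moment4 (jmul g) (jmul h) (jmul g) (jmul h).
  by rewrite /moment4 mulr_sumr -!big_split; apply: eq_bigr => i _; rewrite /bmeas /=; ring.
have := moment4_near_Stensor g h g h; have := moment4_near_Stensor g h (jmul g) (jmul h).
have := moment4_near_Stensor (jmul g) (jmul h) (jmul g) (jmul h).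
rewrite !ler_distl !tpair_Stensor !rnorm_jmul !rdot_jmul2 !rdot_jmul_diag gh_orth hg_orth.
rewrite (rdotC h g) -!rnorm_sqr => /andP[l1 _] /andP[l2 _] /andP[l3 _].
have : 0 <= c * rdot g h ^+ 2 by rewrite mulr_ge0 ?sqr_ge0 ?ltW.
by lra.
Qed.

End Concentration.

(* Needed because [critical_point] compares ['d f u] with the null map as an element of
   [{linear _ -> _}]. *)
Lemma linear_ext (R : pzRingType) (U W : lmodType R) (f g : {linear U -> W}) :
  f =1 g -> f = g.
Proof.
case: f => f [[fD] [fZ]]; case: g => g [[gD] [gZ]] /= /boolp.funext fg; subst g.
by rewrite (Prop_irrelevance fD gD) (Prop_irrelevance fZ gZ).
Qed.

Section Landscape.
Variables (R : realType) (n m : nat) (a : 'I_m -> 'rV[R[i]]_n) (xnat : 'rV[R[i]]_n).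
Local Notation V := 'rV[R]_(n + n).
Local Notation f := (floss a xnat).
Local Notation y i := (qmeas a i (plusv xnat)).
Implicit Types (u v : V).

Lemma floss_ge0 u : 0 <= f u.
Proof. by rewrite flossE sumr_ge0 // => i _; rewrite sqr_ge0. Qed.

Lemma global_minimizer_flossP u : global_minimizer f u <-> forall i, qmeas a i u = y i.
Proof.
split=> [umin i | uy w]; last first.
  by rewrite flossE big1 ?floss_ge0 // => i _; rewrite uy subrr expr0n.
have : f u = 0.
  apply/le_anti; rewrite floss_ge0 andbT; apply: le_trans (umin (plusv xnat)) _.
  by rewrite flossE big1 // => j _; rewrite subrr expr0n.
rewrite flossE => /eqP; rewrite psumr_eq0 => [/allP/(_ i (mem_index_enum _))|j _].
  by rewrite sqrf_eq0 subr_eq0 => /eqP.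
exact: sqr_ge0.
Qed.

Lemma critical_point_flossP u : critical_point f u <->
  forall v, \sum_(i < m) (qmeas a i u - y i) * bmeas a i u v = 0.
Proof.
have df v : 'd f u v = 4 * \sum_(i < m) (qmeas a i u - y i) * bmeas a i u v.
  rewrite -deriveE; last exact: differentiable_floss.
  by rewrite derive_floss mulr_sumr; apply: eq_bigr => i _; rewrite mulrA.
split=> [[_ df0] v | crit].
  by apply: (@mulfI _ 4); rewrite ?pnatr_eq0 // mulr0 -df df0.
split; first exact: differentiable_floss.
by apply: linear_ext => v; rewrite df crit mulr0.
Qed.

End Landscape.

Section NoSpuriousCriticalPoints.
Variables (R : realType) (n m : nat) (a : 'I_m -> 'rV[R[i]]_n) (xnat : 'rV[R[i]]_n).
Variables (sigma d : R).
Hypotheses (m_gt0 : (0 < m)%N) (sigma_gt0 : 0 < sigma).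
Hypothesis T_near_S : opnorm4 (tsub (Ttensor a sigma) (@Stensor R (n + n))) <= d.
Local Notation V := 'rV[R]_(n + n).
Local Notation y i := (qmeas a i (plusv xnat)).
Implicit Types (u g h : V).

Lemma critical_offset_eq0 g h : d <= 1 / 10 ->
  (forall i, qmeas a i g = y i) -> rdot g (jmul h) = 0 ->
  \sum_(i < m) (qmeas a i (g + h) - y i) * bmeas a i (g + h) h = 0 ->
  36 * rdot h h <= rdot (plusv xnat) (plusv xnat) ->
  h = 0.
Proof.
move=> d_small gy gh_orth crit h_small.
have c_gt0 : 0 < m%:R * sigma ^+ 4 by rewrite mulr_gt0 ?exprn_gt0 ?ltr0n.
have Bh := sum_bmeas_sqr_le_qmeas gy crit.
have Bgh := sum_bmeas_sqr_ge m_gt0 sigma_gt0 T_near_S gh_orth.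
have /andP[_ Qh] := sum_qmeas_sqr_bounds m_gt0 sigma_gt0 T_near_S h.
have /andP[_ Qg] := sum_qmeas_sqr_bounds m_gt0 sigma_gt0 T_near_S g.
have /andP[Qx _] := sum_qmeas_sqr_bounds m_gt0 sigma_gt0 T_near_S (plusv xnat).
rewrite (eq_bigr _ (fun i _ => congr1 (fun r => r ^+ 2) (gy i))) in Qg.
apply: rdot_eq0; apply/le_anti; rewrite rdot_ge0 andbT leNgt; apply/negP => H_gt0.
move: Bh Bgh Qh Qg Qx h_small H_gt0 (rdot_ge0 g).
set G := rdot g g; set H := rdot h h; set X := rdot _ _; set c := _ * sigma ^+ 4 in c_gt0 *.
move=> Bh Bgh Qh Qg Qx hX H_gt0 G_ge0.
have GH : (2 - 4 * d) * G <= (8 + 4 * d) * H.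
  rewrite -(ler_pM2l (mulr_gt0 c_gt0 H_gt0)).
  by have := le_trans Bgh (le_trans Bh Qh); lra.
have XG : (8 - 4 * d) * X ^+ 2 <= (8 + 4 * d) * G ^+ 2.
  by rewrite -(ler_pM2l c_gt0); have := le_trans Qx Qg; lra.
have d_gap : 0 <= 4 / 10 - 4 * d by lra.
have G_small : G <= X / 6.
  have := mulr_ge0 d_gap G_ge0; have := mulr_ge0 d_gap (ltW H_gt0); lra.
have G2_small : G ^+ 2 <= X ^+ 2 / 36.
  have := ler_pM G_ge0 G_ge0 G_small G_small; rewrite expr2; lra.
have X2_gt0 : 0 < X ^+ 2 by rewrite exprn_gt0 //; lra.
have := mulr_ge0 d_gap (ltW X2_gt0); have := mulr_ge0 d_gap (sqr_ge0 G); lra.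
Qed.

Lemma critical_point_near_minimizer u g0 : d <= 1 / 10 ->
  critical_point (floss a xnat) u -> global_minimizer (floss a xnat) g0 ->
  6 * rnorm (u - g0) <= rnorm (plusv xnat) -> global_minimizer (floss a xnat) u.
Proof.
move=> d_small /critical_point_flossP crit /global_minimizer_flossP g0y u_close.
have [cc [ss [css /=]]] := exists_phase_aligned u g0.
set g := phase_rot cc ss g0 => -[g_orth g_closer].
have gy i : qmeas a i g = y i by rewrite qmeas_phase_rot.
have ug : g + (u - g) = u by rewrite addrC subrK.
suff /subr0_eq -> : u - g = 0 by apply/global_minimizer_flossP.
apply: critical_offset_eq0 d_small gy g_orth _ _; first by rewrite ug; exact: crit.
have h_close : 6 * rnorm (u - g) <= rnorm (plusv xnat).
  by apply: le_trans u_close; rewrite ler_pM2l.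
rewrite -!rnorm_sqr; have := rnorm_ge0 (u - g); nra.
Qed.

End NoSpuriousCriticalPoints.

Theorem proposition7 (R : realType) :
  exists C2 : R, 0 < C2 /\
  forall (delta0 : R), 0 < delta0 ->
  forall (n m : nat), (0 < n)%N -> (0 < m)%N ->
  forall (a : 'I_m -> 'rV[R[i]]_n) (xnat : 'rV[R[i]]_n) (sigma : R),
  xnat != 0 -> 0 < sigma ->
  opnorm4 (tsub (Ttensor a sigma) (@Stensor R (n + n)%N)) < delta0 ->
  forall x : 'rV[R[i]]_n,
  dist_set x (Gset a xnat) <=
    (16 - 5 * C2 * delta0) / (192 + 4 * C2 * delta0) * cnorm xnat ->
  (critical_point (floss a xnat) (plusv x) <->
   global_minimizer (floss a xnat) (plusv x)).
Proof.
exists 160; split=> // delta delta_gt0 n m _ m_gt0 a xnat sigma xnat_neq0 sigma_gt0 T_near_S x.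
set rho := (16 - _) / _ => x_close.
have X_gt0 := cnorm_gt0 xnat_neq0.
have G_neq0 : Gset a xnat !=set0 by exists xnat; apply/global_minimizer_flossP.
have rho_ge0 : 0 <= rho.
  by rewrite -(pmulr_lge0 _ X_gt0); apply: le_trans x_close; exact: dist_set_ge0.
have D_gt0 : 0 < 192 + 4 * 160 * delta by lra.
have delta_small : delta <= 1 / 10.
  have := mulr_ge0 rho_ge0 (ltW D_gt0); rewrite /rho divfK ?gt_eqF //; lra.
have rho_small : rho <= 1 / 12 by rewrite /rho ler_pdivrMr //; lra.
have [g0 g0_min g0_close] : exists2 g0, Gset a xnat g0 & cnorm (x - g0) < cnorm xnat / 6.
  by apply: exists_dist_set_lt => //; apply: le_lt_trans x_close _; nra.
split=> [crit | /global_minimizer_flossP xy]; last first.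
  by apply/critical_point_flossP => v; rewrite big1 // => i _; rewrite xy subrr mul0r.
apply: critical_point_near_minimizer m_gt0 sigma_gt0 (ltW T_near_S) _ _ delta_small crit g0_min _.
by rewrite -plusvB -!cnorm_plusv; lra.
Qed.
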